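(* Let $G$ be a multigraph with unit edge capacities and terminal set ${\mathcal T}$, and let $G'$ be a legal contracted graph for $G$, obtained by contracting the clusters of a collection ${\mathcal C}$. Let $S'\subseteq V(G')\setminus{\mathcal T}$ and $E'\subseteq\operatorname{out}_{G'}(S')$ be such that $S'$ is $\alpha$-well-linked for $E'$ in $G'$, for some $\alpha<1$. Let $S\subseteq V(G)\setminus{\mathcal T}$ be obtained from $S'$ by replacing every super-node $v_C\in S'$ ($C\in{\mathcal C}$) with the vertices of $C$. Then $S$ is $\alpha/3$-well-linked for $E'$ in $G$ (where edges of $G'$ are identified with the corresponding edges of $G$, so that $E'\subseteq\operatorname{out}_G(S)$).
   Context: For a set $A$ of vertices, $\operatorname{out}(A)$ is the set of edges with exactly one endpoint in $A$. A set $A$ is $\alpha$-well-linked for a set $\tilde E\subseteq\operatorname{out}(A)$ if for every partition $(X,Y)$ of $A$, with $T_X=\tilde E\cap\operatorname{out}(X)$ and $T_Y=\tilde E\cap\operatorname{out}(Y)$, $|E(X,Y)|\geq\alpha\min\{|T_X|,|T_Y|\}$; $A$ is $\alpha$-well-linked if it is $\alpha$-well-linked for $\operatorname{out}(A)$. A flow between edges of $\operatorname{out}(S)$ is contained in $S$ if every flow path has its first and last edge in $\operatorname{out}(S)$ and all other edges in $G[S]$. A set $S\subseteq V\setminus{\mathcal T}$ with $|\operatorname{out}(S)|=z$ is a good router if $S$ is $1/3$-well-linked and every pair of edges $e,e'\in\operatorname{out}(S)$ can simultaneously send $1/z$ flow units to each other by a flow contained in $S$ with congestion at most $34$. $G'$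 is a legal contracted graph for $G$ if there is a collection ${\mathcal C}$ of disjoint good routers (containing no terminals) such that $G'$ is obtained from $G$ by contracting each $C\in{\mathcal C}$ into a super-node $v_C$ (self-loops removed, parallel edges kept); each edge of $G'$ corresponds to an edge of $G$. *)

From HB Require Import structures.
From mathcomp Require Import all_boot all_order all_algebra.
From mathcomp Require Import reals.
Set Implicit Arguments. Unset Strict Implicit. Unset Printing Implicit Defensive.
Import Order.TTheory GRing.Theory Num.Theory.
Local Open Scope ring_scope.

(* A multigraph (unit capacities) is given by finite types of vertices V and
   edges E together with an endpoint map [ends : E -> V * V]; parallel edges
   are distinct elements of E. *)

Section Graph.
Variables (V E : finType) (ends : E -> V * V).

Definition out (A : {set V}) : {set E} :=
  [set e | ((ends e).1 \in A) != ((ends e).2 \in A)].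

Definition cut (X Y : {set V}) : {set E} :=
  [set e | (((ends e).1 \in X) && ((ends e).2 \in Y))
        || (((ends e).1 \in Y) && ((ends e).2 \in X))].

Definition well_linked_for (R : realType) (A : {set V}) (Et : {set E})
    (alpha : R) : Prop :=
  forall X Y : {set V}, X :|: Y = A -> [disjoint X & Y] ->
    alpha * Num.min (#|Et :&: out X|%:R) (#|Et :&: out Y|%:R)
      <= (#|cut X Y|%:R : R).

Definition well_linked (R : realType) (A : {set V}) (alpha : R) : Prop :=
  well_linked_for A (out A) alpha.

(* A walk: start vertex v0, then steps (e, v) meaning edge e is traversed
   from the previous vertex to v. *)
Fixpoint walk_ok (v0 : V) (p : seq (E * V)) : bool :=
  match p with
  | [::] => true
  | (e, v) :: p' => ((ends e == (v0, v)) || (ends e == (v, v0))) && walk_ok v p'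
  end.

Definition fpath := (V * seq (E * V))%type.

(* a flow path from edge e to edge e' contained in S: its first edge is e,
   its last edge is e' (both in out(S)), and every intermediate vertex lies
   in S (so all other edges are in G[S]). *)
Definition path_in (S : {set V}) (e e' : E) (P : fpath) : bool :=
  let: (v0, p) := P in
  [&& walk_ok v0 p, (0 < size p)%N,
      (head (e, v0) p).1 == e, (last (e, v0) p).1 == e' &
      all (fun v => v \in S) (take (size p).-1 (map snd p))].

Definition load (f : E) (P : fpath) : nat := count (fun s => s.1 == f) P.2.

(* S is a good router (w.r.t. terminal set T):
   S avoids T, S is 1/3-well-linked, and every pair of distinct edges
   e, e' of out(S) (z = |out(S)|) sends 1/z flow units to each other
   simultaneously, via flows contained in S, with total congestion <= 34.
   F e e' is the path decomposition (weight, path) of the flow between e and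
   e'; unordered pairs are enumerated once as those with
   enum_rank e < enum_rank e'. *)
Definition good_router (R : realType) (T S : {set V}) : Prop :=
  [disjoint S & T] /\
  well_linked S (1 / 3 : R) /\
  exists F : E -> E -> seq (R * fpath),
    (forall e e', e \in out S -> e' \in out S -> (enum_rank e < enum_rank e')%N ->
       (forall wP, wP \in F e e' -> 0 <= wP.1 /\ path_in S e e' wP.2) /\
       \sum_(wP <- F e e') wP.1 = 1 / (#|out S|%:R)) /\
    (forall f : E,
       \sum_(e in out S) \sum_(e' in out S | (enum_rank e < enum_rank e')%N)
          \sum_(wP <- F e e') wP.1 * (load f wP.2)%:R <= 34).

End Graph.

Section Contract.
Variables (V E : finType) (ends : E -> V * V) (Cs : {set {set V}}).

(* the vertex set of G that becomes the image vertex of v in G':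
   the cluster containing v, or {v} if v lies in no cluster *)
Definition cls (v : V) : {set V} :=
  if [pick C in Cs | v \in C] is Some C then C else [set v].

(* vertices of G': super-nodes v_C (represented by C) and the remaining
   vertices v (represented by [set v]) *)
Definition cV : finType := {A : {set V} | [exists v, cls v == A]}.

Definition cproj (v : V) : cV :=
  @exist _ (fun A => [exists v, cls v == A]) (cls v)
    (introT existsP (ex_intro _ v (eqxx (cls v)))).

(* edges of G': the edges of G that do not become self-loops *)
Definition cE : finType := {e : E | cls (ends e).1 != cls (ends e).2}.

Definition cends (e : cE) : cV * cV :=
  (cproj (ends (val e)).1, cproj (ends (val e)).2).

(* Cs is a collection of disjoint good routers containing no terminals
   (so that G' = (cV, cE, cends) is a legal contracted graph for G) *)
Definition legal_collection (R : realType) (T : {set V}) : Prop :=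
  trivIset Cs /\ forall C, C \in Cs -> good_router ends R T C.

End Contract.

Arguments cends {V E} ends Cs e.
Arguments cproj {V} Cs v.

From HB Require Import structures.
From mathcomp Require Import all_boot all_order all_algebra.
From mathcomp Require Import reals lra zify.
Import Order.TTheory GRing.Theory Num.Theory.
Set Implicit Arguments. Unset Strict Implicit. Unset Printing Implicit Defensive.
Local Open Scope ring_scope.

(* Let (X, Y) partition S.  Put each cluster of S' on the side X' or Y' that
   holds the majority of its boundary edges (counted at their endpoints inside
   the cluster), and call a vertex misplaced when its side in G differs from
   the side of its cluster.  A non-loop edge with a misplaced endpoint is a
   boundary edge of its cluster attached to the minority side, and as the
   cluster is 1/3-well-linked there are at most three times as many of these as
   edges of E(X, Y) inside the cluster.  Passing from (X, Y) to (X', Y')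
   changes the E'-terminal counts by at most the misplaced E'-edges, and every
   other edge of E(X', Y') lies in E(X, Y) outside the clusters; hence
   alpha min(|T_X|, |T_Y|) <= |E(X', Y')| + #misplaced E'-edges <= 3 |E(X, Y)|. *)

Lemma card_bigcup_le (I T : finType) (F : I -> {set T}) :
  (#|\bigcup_i F i| <= \sum_i #|F i|)%N.
Proof.
elim/big_rec2: _ => [|i U n _ IH]; first by rewrite cards0.
exact: leq_trans (leq_card_setU _ _) (leq_add _ IH).
Qed.

Lemma card_bigcup_disjoint (I T : finType) (F : I -> {set T}) :
  (forall i j, i != j -> [disjoint F i & F j]) ->
  #|\bigcup_i F i| = (\sum_i #|F i|)%N.
Proof.
move=> disjF; rewrite -sum1_card (partition_disjoint_bigcup _ _ disjF).
by apply: eq_bigr => i _; rewrite sum1_card.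
Qed.

Lemma well_linked_third_minn (R : realType) (V E : finType) (ends : E -> V * V)
    (C X Y : {set V}) :
  well_linked ends C (1 / 3 : R) -> C \subset X :|: Y -> [disjoint X & Y] ->
  (minn #|out ends C :&: out ends (C :&: X)| #|out ends C :&: out ends (C :&: Y)|
    <= 3 * #|cut ends (C :&: X) (C :&: Y)|)%N.
Proof.
move=> wlC CXY dXY.
have partC : C :&: X :|: C :&: Y = C by rewrite -setIUr; apply/setIidPl.
have disjC : [disjoint C :&: X & C :&: Y].
  exact: disjointWl (subsetIr _ _) (disjointWr (subsetIr _ _) dXY).
move: (wlC _ _ partC disjC); rewrite -(ler_nat R) natrM.
set a := #|_ :&: out _ (C :&: X)|; set b := #|_ :&: out _ (C :&: Y)|.
case: (leqP a b) => [ab|/ltnW ba].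
  by rewrite min_l ?ler_nat //; lra.
by rewrite min_r ?ler_nat //; lra.
Qed.

Lemma out_set0 (V E : finType) (ends : E -> V * V) : out ends set0 = set0.
Proof. by apply/setP => e; rewrite !inE. Qed.

Lemma cut_notin_out (V E : finType) (ends : E -> V * V) (S A B : {set V}) e :
  A \subset S -> B \subset S -> e \in cut ends A B -> e \notin out ends S.
Proof.
move=> sAS sBS; rewrite !inE negbK.
by case/orP => [/andP[/(subsetP sAS) -> /(subsetP sBS) ->]
              | /andP[/(subsetP sBS) -> /(subsetP sAS) ->]].
Qed.

Lemma scaled_min_perturb_le (R : realDomainType) (alpha : R) (a b a' b' c d : nat) :
    alpha < 1 -> (a <= a' + d)%N -> (b <= b' + d)%N ->
    alpha * Num.min a'%:R b'%:R <= c%:R ->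
  alpha * Num.min a%:R b%:R <= (c + d)%:R.
Proof.
rewrite -!(ler_nat R) !natrD => alpha_lt1 aa' bb' wl'.
have [alpha_le0|alpha_gt0] := leP alpha 0.
  by apply: (@le_trans _ _ 0); rewrite ?mulr_le0_ge0 ?addr_ge0 // le_min !ler0n.
have min_le : Num.min a%:R b%:R <= Num.min a'%:R b'%:R + d%:R :> R.
  by rewrite ge_min; case: (leP a'%:R b'%:R) => _; rewrite ?aa' ?bb' ?orbT.
apply: le_trans (ler_wpM2l (ltW alpha_gt0) min_le) _.
by rewrite mulrDr lerD // ler_piMl // ltW.
Qed.

Section Clusters.
Variables (V : finType) (Cs : {set {set V}}).
Hypothesis trivCs : trivIset Cs.

Lemma mem_cls v : v \in cls Cs v.
Proof. by rewrite /cls; case: pickP => [C /andP[]|_] //; rewrite set11. Qed.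

Lemma cls_eq x v : x \in cls Cs v -> cls Cs x = cls Cs v.
Proof.
rewrite /cls; case: (pickP (fun C => (C \in Cs) && (v \in C))) => [C /andP[CsC vC] xC|noC].
  case: pickP => [C' /andP[CsC' xC']|/(_ C)]; last by rewrite CsC xC.
  apply: contraTeq xC' => neqC'C.
  by rewrite (disjointFl (trivIsetP trivCs _ _ CsC' CsC neqC'C) xC).
move/set1P=> ->; case: pickP => // C /andP[CsC vC].
by move: (noC C); rewrite CsC vC.
Qed.

Lemma mem_cV x (k : cV Cs) : (x \in val k) = (cproj Cs x == k).
Proof.
apply/idP/eqP => [xk|<-]; last exact: mem_cls.
case: k xk => A /[dup] /existsP[v /eqP <-] kA xA; apply: val_inj => /=.
exact: cls_eq.
Qed.

End Clusters.

Section Relabel.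
Variables (R : realType) (V E : finType) (ends : E -> V * V) (Cs : {set {set V}}).
Hypotheses (trivCs : trivIset Cs)
  (wlCs : forall C, C \in Cs -> well_linked ends C (1 / 3 : R)).
Variables (S' : {set cV Cs}) (E' : {set cE ends Cs}).
Hypothesis E'_out : E' \subset out (cends ends Cs) S'.
Variables X Y : {set V}.
Hypotheses (XUY : X :|: Y = cproj Cs @^-1: S') (disjXY : [disjoint X & Y]).

Definition cluster_out (k : cV Cs) (Z : {set V}) : {set E} :=
  out ends (val k) :&: out ends (val k :&: Z).

Definition majX : {set cV Cs} :=
  [set k in S' | #|cluster_out k Y| <= #|cluster_out k X|]%N.
Definition majY : {set cV Cs} := S' :\: majX.

Definition misplaced (a : V) : bool := (a \in X) != (cproj Cs a \in majX).

Definition loops : {set E} := [set e | cls Cs (ends e).1 == cls Cs (ends e).2].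

Definition misplaced_edges : {set E} :=
  [set e | (misplaced (ends e).1 || misplaced (ends e).2) && (e \notin loops)].

Definition minority_out (k : cV Cs) : {set E} :=
  if k \in majX then cluster_out k Y else cluster_out k X.

Definition inner_cut (k : cV Cs) : {set E} := cut ends (val k :&: X) (val k :&: Y).

Lemma mem_XUY a : (a \in X :|: Y) = (cproj Cs a \in S').
Proof. by rewrite XUY inE. Qed.

Lemma majX_sub : majX \subset S'.
Proof. by apply/subsetP => k; rewrite inE => /andP[]. Qed.

Lemma majXUY : majX :|: majY = S'.
Proof.
apply/setP => k; rewrite in_setU in_setD.
by case: (boolP (k \in majX)) => //= /(subsetP majX_sub) ->.
Qed.

Lemma disjoint_maj : [disjoint majX & majY].
Proof. by rewrite disjoint_sym disjoints_subset subsetDr. Qed.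

Lemma misplacedY a : ((a \in Y) != (cproj Cs a \in majY)) = misplaced a.
Proof.
rewrite /misplaced in_setD -mem_XUY in_setU.
case aX: (a \in X) => /=; first by rewrite (disjointFr disjXY aX); case: (_ \in majX).
case aY: (a \in Y) => /=; first by case: (_ \in majX).
by case: (boolP (_ \in majX)) => // /(subsetP majX_sub); rewrite -mem_XUY inE aX aY.
Qed.

Lemma misplaced_mem a : misplaced a -> a \in X :|: Y.
Proof.
rewrite /misplaced mem_XUY; apply: contraTT => aS'.
rewrite (contraNF (subsetP majX_sub _) aS').
case aX: (a \in X) => //; case/negP: aS'.
by rewrite -mem_XUY inE aX.
Qed.

Lemma placedE a : ~~ misplaced a ->
  ((a \in X) = (cproj Cs a \in majX)) * ((a \in Y) = (cproj Cs a \in majY)).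
Proof. by move=> ok; split; apply/eqP/negbNE; rewrite ?misplacedY. Qed.

Lemma card_terminals_out_le (Z : {set V}) (Z' : {set cV Cs}) :
    (forall a, ((a \in Z) != (cproj Cs a \in Z')) = misplaced a) ->
  (#|val @: E' :&: out ends Z| <=
     #|E' :&: out (cends ends Cs) Z'| + #|misplaced_edges :&: val @: E'|)%N.
Proof.
move=> misZ.
have sub : val @: E' :&: out ends Z \subset
           val @: (E' :&: out (cends ends Cs) Z') :|: misplaced_edges :&: val @: E'.
  apply/subsetP => _ /setIP[/imsetP[e eE' ->] eZ].
  case eZ': (e \in out (cends ends Cs) Z').
    by rewrite inE imset_f // inE eE'.
  apply/setUP; right; apply/setIP; split; last exact: imset_f.
  rewrite !inE (valP e) andbT -!misZ.
  move: eZ eZ'; rewrite !inE /cends /=.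
  by case: (_ \in Z); case: (_ \in Z); case: (_ \in Z'); case: (_ \in Z').
apply: leq_trans (subset_leq_card sub) _.
by apply: leq_trans (leq_card_setU _ _) _; rewrite card_imset //; exact: val_inj.
Qed.

Lemma card_ccut_le :
  (#|cut (cends ends Cs) majX majY| <=
     #|cut ends X Y :\: loops| + #|misplaced_edges :\: val @: E'|)%N.
Proof.
rewrite -(card_imset _ val_inj).
apply: leq_trans (leq_card_setU _ _); apply: subset_leq_card.
apply/subsetP => _ /imsetP[e eXY' ->].
have notE' : val e \notin val @: E'.
  apply/imsetP => -[e' e'E' /val_inj eq_e]; subst e'.
  move: (subsetP E'_out _ e'E'); apply/negP.
  exact: cut_notin_out majX_sub (subsetDl _ _) eXY'.
case: (boolP (misplaced (ends (val e)).1 || misplaced (ends (val e)).2)) => [mis|].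
  by apply/setUP; right; rewrite in_setD notE' !inE mis; exact: valP e.
rewrite negb_or => /andP[/placedE ok1 /placedE ok2].
apply/setUP; left; rewrite in_setD !inE (valP e) /=.
by move: eXY'; rewrite [_ \in cut _ _ _]inE /cends /= -!ok1 -!ok2.
Qed.

Lemma misplaced_minority e a b : ends e = (a, b) \/ ends e = (b, a) ->
  cls Cs a != cls Cs b -> misplaced a -> e \in minority_out (cproj Cs a).
Proof.
move=> eab neq_ab mis_a.
have b_out : b \notin cls Cs a.
  by apply: contra neq_ab => /(cls_eq trivCs) ->.
have side : a \in (if cproj Cs a \in majX then Y else X).
  move: mis_a (misplaced_mem mis_a); rewrite /misplaced in_setU.
  by case: (_ \in majX) => /=; case: (a \in X) => //= _ ->.
rewrite /minority_out /cluster_out; case: ifP side => _ side; rewrite !inE;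
  by case: eab => ->; rewrite /= mem_cls (negbTE b_out) side.
Qed.

Lemma misplaced_edges_sub : misplaced_edges \subset \bigcup_k minority_out k.
Proof.
apply/subsetP => e; rewrite !inE => /andP[/orP[mis1|mis2] not_loop]; apply/bigcupP.
  exists (cproj Cs (ends e).1) => //.
  by apply: misplaced_minority not_loop mis1; left; case: (ends e).
exists (cproj Cs (ends e).2) => //.
rewrite eq_sym in not_loop.
by apply: misplaced_minority not_loop mis2; right; case: (ends e).
Qed.

Lemma cluster_sub k : k \in S' -> val k \subset X :|: Y.
Proof. by move=> kS; apply/subsetP => x; rewrite (mem_cV trivCs) mem_XUY => /eqP ->. Qed.

Lemma minn_cluster_out_le k : k \in S' ->
  (minn #|cluster_out k X| #|cluster_out k Y| <= 3 * #|inner_cut k|)%N.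
Proof.
move/cluster_sub; rewrite /cluster_out /inner_cut.
case: k => A /= /existsP[v /eqP <-]; rewrite /cls.
case: pickP => [C /andP[CsC _] CXY|_ _].
  exact: well_linked_third_minn (wlCs CsC) CXY disjXY.
have [vX|vX] := boolP (v \in X).
  have -> : [set v] :&: Y = set0.
    by apply/eqP; rewrite setI_eq0 disjoints1 (disjointFr disjXY vX).
  by rewrite out_set0 setI0 cards0 minn0.
have -> : [set v] :&: X = set0 by apply/eqP; rewrite setI_eq0 disjoints1.
by rewrite out_set0 setI0 cards0 min0n.
Qed.

Lemma card_minority_le k : (#|minority_out k| <= 3 * #|inner_cut k|)%N.
Proof.
have [kS|kS] := boolP (k \in S'); last first.
  have kX : val k :&: X = set0.
    apply/setP => x; rewrite !inE (mem_cV trivCs); apply/negbTE.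
    by apply: contraNN kS => /andP[/eqP <- xX]; rewrite -mem_XUY inE xX.
  rewrite /minority_out (contraNF (subsetP majX_sub k) kS) /cluster_out kX.
  by rewrite out_set0 setI0 cards0.
apply: leq_trans (minn_cluster_out_le kS); rewrite leq_min /minority_out.
case: ifP => kmaj; rewrite leqnn ?andbT /=.
  by move: kmaj; rewrite inE => /andP[].
by move: kmaj; rewrite inE kS /= => /negbT; rewrite -ltnNge => /ltnW.
Qed.

Lemma inner_cutP k e : e \in inner_cut k ->
  [/\ (ends e).1 \in val k, (ends e).2 \in val k & e \in cut ends X Y].
Proof.
rewrite /inner_cut !inE.
by case/orP => /andP[/andP[-> ->] /andP[-> ->]]; rewrite ?orbT.
Qed.

Lemma card_misplaced_edges_le :
  (#|misplaced_edges| <= 3 * #|cut ends X Y :&: loops|)%N.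
Proof.
have disj_inner k j : k != j -> [disjoint inner_cut k & inner_cut j].
  move=> neq_kj; rewrite -setI_eq0; apply/set0Pn => -[e /setIP[ek ej]].
  have [+ _ _] := inner_cutP ek; have [+ _ _] := inner_cutP ej.
  rewrite !(mem_cV trivCs) => /eqP ej1 /eqP ek1.
  by rewrite -ej1 -ek1 eqxx in neq_kj.
have inner_sub : \bigcup_k inner_cut k \subset cut ends X Y :&: loops.
  apply/bigcupsP => k _; apply/subsetP => e /inner_cutP[].
  rewrite !(mem_cV trivCs) => /eqP e1 /eqP e2 eXY.
  by rewrite inE eXY inE; apply/eqP; exact: (congr1 val (etrans e1 (esym e2))).
apply: leq_trans (subset_leq_card misplaced_edges_sub) _.
apply: (leq_trans (card_bigcup_le minority_out)).
apply: leq_trans (leq_sum _ (fun k _ => card_minority_le k)) _.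
by rewrite -big_distrr /= leq_mul2l /= -card_bigcup_disjoint // subset_leq_card.
Qed.

Lemma card_ccut_misplaced_le :
  (#|cut (cends ends Cs) majX majY| + #|misplaced_edges :&: val @: E'|
     <= 3 * #|cut ends X Y|)%N.
Proof.
have := card_ccut_le; have := card_misplaced_edges_le.
have := cardsID (val @: E') misplaced_edges; have := cardsID loops (cut ends X Y).
lia.
Qed.

Lemma terminals_min_le (alpha : R) : alpha < 1 ->
    well_linked_for (cends ends Cs) S' E' alpha ->
  alpha * Num.min #|val @: E' :&: out ends X|%:R #|val @: E' :&: out ends Y|%:R
    <= (#|cut (cends ends Cs) majX majY| + #|misplaced_edges :&: val @: E'|)%:R.
Proof.
move=> alpha_lt1 wlS'; apply: scaled_min_perturb_le alpha_lt1 _ _ _.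
- exact: card_terminals_out_le (fun a => erefl).
- exact: card_terminals_out_le misplacedY.
- exact: wlS' _ _ majXUY disjoint_maj.
Qed.
End Relabel.

Theorem claim3 (R : realType) (V E : finType) (ends : E -> V * V)
    (T : {set V}) (Cs : {set {set V}})
    (hC : legal_collection ends Cs R T)
    (S' : {set cV Cs}) (E' : {set cE ends Cs}) (alpha : R)
    (halpha : alpha < 1)
    (hS'T : [disjoint S' & cproj Cs @: T])
    (hE' : E' \subset out (cends ends Cs) S')
    (hwl : well_linked_for (cends ends Cs) S' E' alpha) :
  well_linked_for ends (cproj Cs @^-1: S') (val @: E') (alpha / 3).
Proof.
have [trivCs routers] := hC.
have wlCs C : C \in Cs -> well_linked ends C (1 / 3 : R).
  by case/routers => _ [].
move=> X Y XUY disjXY.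
have le_ccut := terminals_min_le XUY disjXY halpha hwl.
have := card_ccut_misplaced_le trivCs wlCs hE' XUY disjXY.
rewrite -(ler_nat R) natrM => le_3cut.
rewrite mulrAC; lra.
Qed.
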